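(* Let $(\mathcal{U},f,g,\preccurlyeq)$ be a fault-tolerance partially ordered $(m,n)$-semiring as described in the context, and let $x_1,\ldots,x_m,y_1,\ldots,y_m,z_1,\ldots,z_n,u_1,\ldots,u_n\in\mathcal{U}$ be disjoint components. (i) If $f(f(x_1^m),\ldots,f(x_1^m))\preccurlyeq f(y_1^m)$ (with $m$ copies of $f(x_1^m)$), then $f(x_1^m)\preccurlyeq f(y_1^m)$. (ii) If $g(z_1^n)\preccurlyeq g(g(u_1^n),\ldots,g(u_1^n))$ (with $n$ copies of $g(u_1^n)$), then $g(z_1^n)\preccurlyeq g(u_1^n)$.
   Context: Notation: $x_i^j$ denotes $x_i,\ldots,x_j$. $(\mathcal{U},f,g)$ is an $(m,n)$-semiring: $f$ is an associative $m$-ary and $g$ an associative $n$-ary operation on $\mathcal{U}$ (associativity of a $k$-ary $h$: $h(x_1^{i-1},h(x_i^{k+i-1}),x_{k+i}^{2k-1})=h(x_1^{j-1},h(x_j^{k+j-1}),x_{k+j}^{2k-1})$ for $1\le i\le j\le k$), and $g$ distributes over $f$ in every position. $\mathcal{U}$ is interpreted as a set of systems; $f(x_1^m)$ is the system that fails when any $x_i$ fails, $g(y_1^n)$ the system that fails only when all $y_j$ fail; elements are assumed to be disjoint components (failing independently), which imposes no further algebraic condition. $\mathbf{0}\in\mathcal{U}$ (the always-up system) is an $f$-identity ($f(\mathbf{0},\ldots,x,\ldots,\mathbf{0})=x$ in every position) and $\mathbf{1}$ (the always-down system) is a $g$-identity; moreover $g(y_1^{j-1},\mathbf{0},y_{j+1}^n)=\mathbf{0}$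 and $f(x_1^{i-1},\mathbf{1},x_{i+1}^m)=\mathbf{1}$ for all arguments and positions. $\preccurlyeq$ is a partial order on $\mathcal{U}$ (''fault-tolerance partial order'') such that $(\mathcal{U},f,g,\preccurlyeq)$ is a partially ordered $(m,n)$-semiring: $a\preccurlyeq b$ implies $f(x_1^{i-1},a,x_{i+1}^m)\preccurlyeq f(x_1^{i-1},b,x_{i+1}^m)$ and $g(y_1^{j-1},a,y_{j+1}^n)\preccurlyeq g(y_1^{j-1},b,y_{j+1}^n)$ for all arguments and all positions; and $\mathbf{0}\preccurlyeq a\preccurlyeq\mathbf{1}$ for all $a\in\mathcal{U}$. *)

From mathcomp Require Import all_boot.
Set Implicit Arguments. Unset Strict Implicit. Unset Printing Implicit Defensive.

Definition repl (U : Type) (k : nat) (x : 'I_k -> U) (i : 'I_k) (a : U) : 'I_k -> U :=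
  fun l => if l == i then a else x l.

(* h(x_0^{i-1}, h(x_i^{i+k-1}), x_{i+k}^{2k-2}), 0-indexed, x : nat -> U
   (only indices < 2k-1 are used) *)
Definition assoc_at (U : Type) (k : nat) (h : ('I_k -> U) -> U) (x : nat -> U) (i : nat) : U :=
  h (fun j : 'I_k =>
       if (j < i)%N then x j
       else if (j == i :> nat) then h (fun l : 'I_k => x (i + l)%N)
       else x (j + k - 1)%N).

Definition nary_assoc (U : Type) (k : nat) (h : ('I_k -> U) -> U) : Prop :=
  forall (x : nat -> U) (i j : nat), (i < k)%N -> (j < k)%N ->
    assoc_at h x i = assoc_at h x j.

Record mn_semiring (U : Type) (m n : nat)
    (f : ('I_m -> U) -> U) (g : ('I_n -> U) -> U) : Prop := {
  sr_m : (2 <= m)%N;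
  sr_n : (2 <= n)%N;
  sr_f_assoc : nary_assoc f;
  sr_g_assoc : nary_assoc g;
  sr_distr : forall (y : 'I_n -> U) (j : 'I_n) (x : 'I_m -> U),
      g (repl y j (f x)) = f (fun i => g (repl y j (x i)))
}.

Record ft_po_semiring (U : Type) (m n : nat)
    (f : ('I_m -> U) -> U) (g : ('I_n -> U) -> U)
    (le : U -> U -> Prop) (zero one : U) : Prop := {
  ft_semiring : mn_semiring f g;
  ft_f_id : forall (i : 'I_m) (a : U), f (repl (fun _ => zero) i a) = a;
  ft_g_id : forall (j : 'I_n) (a : U), g (repl (fun _ => one) j a) = a;
  ft_g_zero : forall (y : 'I_n -> U) (j : 'I_n), g (repl y j zero) = zero;
  ft_f_one : forall (x : 'I_m -> U) (i : 'I_m), f (repl x i one) = one;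
  ft_refl : forall a, le a a;
  ft_antisym : forall a b, le a b -> le b a -> a = b;
  ft_trans : forall a b c, le a b -> le b c -> le a c;
  ft_f_mono : forall (x : 'I_m -> U) (i : 'I_m) a b,
      le a b -> le (f (repl x i a)) (f (repl x i b));
  ft_g_mono : forall (y : 'I_n -> U) (j : 'I_n) a b,
      le a b -> le (g (repl y j a)) (g (repl y j b));
  ft_bot : forall a, le zero a;
  ft_top : forall a, le a one
}.

From mathcomp Require Import all_boot.
From Stdlib Require Import FunctionalExtensionality.

(* Since [zero] is an [f]-identity and the bottom element, monotonicity of [f]
   in every argument gives [f x = f(f x, 0, ..., 0) <= f(f x, ..., f x)];
   dually, [g(g u, ..., g u) <= g(g u, 1, ..., 1) = g u] because [one] is a
   [g]-identity and the top element. *)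

Section PointwiseMonotone.

Variables (U : Type) (le : U -> U -> Prop).
Hypothesis le_refl : forall a, le a a.
Hypothesis le_trans : forall a b c, le a b -> le b c -> le a c.

Definition splice {k : nat} (t : nat) (a b : 'I_k -> U) : 'I_k -> U :=
  fun l => if (l < t)%N then b l else a l.

Lemma splice_succ (k t : nat) (a b : 'I_k -> U) (Htk : (t < k)%N) :
  let i := Ordinal Htk in
  splice t a b = repl (splice t a b) i (a i) /\
  splice t.+1 a b = repl (splice t a b) i (b i).
Proof.
split; apply: functional_extensionality => l; rewrite /repl /splice.
- by case: eqP => [->|]; rewrite ?ltnn.
- rewrite ltnS; case: eqP => [->|ne]; first by rewrite /= leqnn.
  rewrite leq_eqVlt; case: eqP => // el; case: ne; exact: val_inj.
Qed.

Lemma le_op_pointwise k (h : ('I_k -> U) -> U) :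
  (forall x i a b, le a b -> le (h (repl x i a)) (h (repl x i b))) ->
  forall a b : 'I_k -> U, (forall i, le (a i) (b i)) -> le (h a) (h b).
Proof.
move=> h_mono a b le_ab.
have le_splice t : (t <= k)%N -> le (h a) (h (splice t a b)).
  elim: t => [|t IH] Ht.
    have -> : splice 0 a b = a by apply: functional_extensionality.
    exact: le_refl.
  have [E0 E1] := @splice_succ k t a b Ht.
  apply: le_trans (IH (ltnW Ht)) _.
  by rewrite E0 E1; apply: h_mono.
have -> : b = splice k a b.
  by apply: functional_extensionality => l; rewrite /splice ltn_ord.
exact: le_splice.
Qed.

End PointwiseMonotone.

Section FaultTolerance.

Variables (U : Type) (m n : nat).
Variables (f : ('I_m -> U) -> U) (g : ('I_n -> U) -> U).
Variables (le : U -> U -> Prop) (zero one : U).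
Hypothesis F : ft_po_semiring f g le zero one.

Lemma f_le_f_const (x : 'I_m -> U) : le (f x) (f (fun _ => f x)).
Proof.
have m_gt0 : (0 < m)%N by apply: leq_trans (sr_m (ft_semiring F)).
rewrite -{1}(ft_f_id F (Ordinal m_gt0) (f x)).
apply: (@le_op_pointwise _ _ (ft_refl F) (ft_trans F) _ _ (ft_f_mono F)) => i.
by rewrite /repl; case: eqP => _; [exact: (ft_refl F) | exact: (ft_bot F)].
Qed.

Lemma g_const_le_g (u : 'I_n -> U) : le (g (fun _ => g u)) (g u).
Proof.
have n_gt0 : (0 < n)%N by apply: leq_trans (sr_n (ft_semiring F)).
rewrite -{2}(ft_g_id F (Ordinal n_gt0) (g u)).
apply: (@le_op_pointwise _ _ (ft_refl F) (ft_trans F) _ _ (ft_g_mono F)) => i.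
by rewrite /repl; case: eqP => _; [exact: (ft_refl F) | exact: (ft_top F)].
Qed.

End FaultTolerance.

Theorem corollary3 (U : Type) (m n : nat)
    (f : ('I_m -> U) -> U) (g : ('I_n -> U) -> U)
    (le : U -> U -> Prop) (zero one : U) :
  ft_po_semiring f g le zero one ->
  (forall x y : 'I_m -> U, le (f (fun _ => f x)) (f y) -> le (f x) (f y)) /\
  (forall z u : 'I_n -> U, le (g z) (g (fun _ => g u)) -> le (g z) (g u)).
Proof.
move=> F; split.
- by move=> x y; apply: (ft_trans F); apply: f_le_f_const F x.
- by move=> z u le_z; apply: (ft_trans F le_z); apply: g_const_le_g F u.
Qed.
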